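(* Let $0<x_{\rm B}<x_{\rm A}$ and $v_E=\sqrt{2/x_{\rm A}}$. The function $T_D^R:\,]-\infty,v_E[\,\to\,]0,\infty[$ is strictly convex, with ${\rm d}^2T_D^R/{\rm d}v_{\rm A}^2>0$ everywhere.
   Context: Kepler problem on a line normalized as $\ddot x=-1/x^2$ ($x>0$), center ${\rm O}$ at $x=0$. For $v_{\rm A}<v_E$, $T_D^R(v_{\rm A})$ is the first time after $t_{\rm A}$ (minus $t_{\rm A}$) at which the solution with $x(t_{\rm A})=x_{\rm A}$, $\dot x(t_{\rm A})=v_{\rm A}$ reaches $x_{\rm B}$; this happens without collision with ${\rm O}$, possibly after a culmination (maximum of $x$) when $v_{\rm A}\ge0$. These are exactly the direct (collision-free) Keplerian arcs from ${\rm A}$ to ${\rm B}$. *)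

From Stdlib Require Import Reals.
Open Scope R_scope.

(* Escape velocity from x_A for the normalized Kepler problem x'' = -1/x^2. *)
Definition vE (xA : R) : R := sqrt (2 / xA).

(* [kepler_sol x v tf]: x is a solution of x'' = -1/x^2 with x > 0 on the
   closed time interval [0, tf], with velocity function v = x'.
   (Time origin t_A = 0; the system is autonomous.) *)
Definition kepler_sol (x v : R -> R) (tf : R) : Prop :=
  forall s, 0 <= s <= tf ->
    0 < x s /\
    derivable_pt_lim x s (v s) /\
    derivable_pt_lim v s (- / (x s ^ 2)).

Definition first_hit (xA xB vA t : R) : Prop :=
  0 < t /\
  exists x v : R -> R,
    kepler_sol x v t /\ x 0 = xA /\ v 0 = vA /\ x t = xB /\
    (forall s, 0 < s < t -> x s <> xB).

From Stdlib Require Import Reals Lra Psatz Ranalysis5.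
From Coquelicot Require Import Coquelicot.
Open Scope R_scope.

(* Since the acceleration -1/x^2 is negative, the velocity strictly decreases along an
   arc and can replace time as parameter. With K = 2/x_A, c = 2/x_B - 2/x_A and
   p = v_A, energy conservation v^2 - 2/x = p^2 - K gives x as a function of v, the
   arrival velocity at x_B is -sqrt(p^2 + c), and dt = -x^2 dv, so
     T(p) = int_{-sqrt(p^2+c)}^{p} 4 / (u^2 - p^2 + K)^2 du,
   for every p < v_E = sqrt K, whether or not the arc culminates. Differentiating twice
   under the integral sign, T'' is an integral plus boundary terms, all nonnegative when
   p >= 0; when p < 0 an explicit primitive of the integrand minus a nonnegative
   function makes the boundary terms collapse to 4c / (K (c+K) (p^2+c)^(3/2)) > 0. *)

Lemma continuity_2d_pt_snd (f : R -> R -> R) y z :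
  continuity_2d_pt f y z -> continuous (f y) z.
Proof.
  intros H. apply continuity_pt_filterlim.
  intros eps Heps. destruct (H (mkposreal eps Heps)) as [d Hd].
  exists d. split; [apply cond_pos|].
  intros t [_ Ht]. apply Hd; [|exact Ht].
  rewrite Rminus_eq_0, Rabs_R0; apply cond_pos.
Qed.

Lemma continuity_2d_pt_Derive_loc (f df : R -> R -> R) x t eps : 0 < eps ->
  (forall u v, Rabs (u - x) < eps -> Rabs (v - t) < eps -> is_derive (fun z => f z v) u (df u v)) ->
  continuity_2d_pt df x t -> continuity_2d_pt (fun u v => Derive (fun z => f z v) u) x t.
Proof.
  intros Heps H. apply continuity_2d_pt_ext_loc.
  exists (mkposreal eps Heps). intros u v Hu Hv. symmetry. apply is_derive_unique, H; assumption.
Qed.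

Lemma is_derive_RInt_param_bounds (f df : R -> R -> R) (a b : R -> R) x da db eps :
  0 < eps ->
  (forall y t, Rabs (y - x) < eps -> Rmin (a x) (b x) - eps < t < Rmax (a x) (b x) + eps ->
     is_derive (fun z => f z t) y (df y t) /\
     continuity_2d_pt f y t /\ continuity_2d_pt df y t) ->
  is_derive a x da -> is_derive b x db ->
  is_derive (fun z => RInt (f z) (a z) (b z)) x
    (RInt (df x) (a x) (b x) - f x (a x) * da + f x (b x) * db).
Proof.
  intros Heps H Ha Hb.
  set (m := Rmin (a x) (b x)) in H. set (M := Rmax (a x) (b x)) in H.
  assert (Ham : m <= a x <= M) by (split; [apply Rmin_l|apply Rmax_l]).
  assert (Hbm : m <= b x <= M) by (split; [apply Rmin_r|apply Rmax_r]).
  pose (e2 := mkposreal (eps / 2) ltac:(lra)).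
  assert (Hloc : forall P : R -> Prop, (forall y, Rabs (y - x) < eps / 2 -> P y) -> locally x P).
  { intros P HP. exists e2. exact HP. }
  assert (HD : forall y t, Rabs (y - x) < eps -> m - eps < t < M + eps ->
            Derive (fun z => f z t) y = df y t).
  { intros y t Hy Ht. apply is_derive_unique, (H y t Hy Ht). }
  assert (HC : forall y t, Rabs (y - x) < eps / 2 -> m - eps / 2 < t < M + eps / 2 ->
            continuity_2d_pt (fun u v => Derive (fun z => f z v) u) y t).
  { intros y t Hy Ht. apply (continuity_2d_pt_Derive_loc f df y t (eps / 2)); [lra| |apply H; lra].
    intros u v Hu Hv. apply H.
    - replace (u - x) with ((u - y) + (y - x)) by ring.
      apply Rle_lt_trans with (1 := Rabs_triang _ _). lra.
    - apply Rabs_def2 in Hv. lra. }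
  assert (Hint : forall y lo hi, Rabs (y - x) < eps -> m - eps < lo < M + eps ->
            m - eps < hi < M + eps -> ex_RInt (f y) lo hi).
  { intros y lo hi Hy Hlo Hhi. apply (ex_RInt_continuous (V := R_CompleteNormedModule)).
    intros z Hz. apply continuity_2d_pt_snd. apply (H y z Hy).
    assert (m - eps < Rmin lo hi) by (apply Rmin_glb_lt; lra).
    assert (Rmax lo hi < M + eps) by (apply Rmax_lub_lt; lra). lra. }
  replace (RInt (df x) (a x) (b x)) with (RInt (fun t => Derive (fun u => f u t) x) (a x) (b x)).
  2:{ apply RInt_ext. intros t Ht. fold m M in Ht. apply HD; [rewrite Rminus_diag, Rabs_R0|]; lra. }
  replace (_ - _ + _) with
    (RInt (fun t => Derive (fun u => f u t) x) (a x) (b x) + - f x (a x) * da + f x (b x) * db)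
    by ring.
  apply is_derive_RInt_param_bound_comp; try assumption.
  - apply Hloc. intros y Hy. apply Hint; lra.
  - exists e2. apply Hloc. intros y Hy. apply Hint; simpl; lra.
  - exists e2. apply Hloc. intros y Hy. apply Hint; simpl; lra.
  - exists e2. apply Hloc. intros y Hy t Ht. exists (df y t). apply (H y t); [lra|].
    simpl in Ht. unfold Rminus in Ht.
    rewrite <- Rplus_min_distr_r, <- Rplus_max_distr_r in Ht. fold m M in Ht. lra.
  - intros t Ht. fold m M in Ht. apply HC; [rewrite Rminus_diag, Rabs_R0|]; lra.
  - exists e2. intros u v Hu Hv. apply Rabs_def2 in Hv. simpl in *. apply HC; lra.
  - exists e2. intros u v Hu Hv. apply Rabs_def2 in Hv. simpl in *. apply HC; lra.
  - apply continuity_pt_filterlim, continuity_2d_pt_snd, (H x); [rewrite Rminus_diag, Rabs_R0|]; lra.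
  - apply continuity_pt_filterlim, continuity_2d_pt_snd, (H x); [rewrite Rminus_diag, Rabs_R0|]; lra.
Qed.

Lemma strict_incr_of_derive_pos (f df : R -> R) a b :
  (forall z, a <= z <= b -> derivable_pt_lim f z (df z)) ->
  (forall z, a < z < b -> 0 < df z) ->
  a < b -> f a < f b.
Proof.
  intros Hd Hpos Hab.
  destruct (MVT_cor2 f df a b Hab Hd) as [z [E Hz]].
  specialize (Hpos z Hz). nra.
Qed.

Lemma eq_of_derive_0 (f : R -> R) t :
  (forall s, 0 <= s <= t -> derivable_pt_lim f s 0) ->
  forall s, 0 <= s <= t -> f s = f 0.
Proof.
  intros H s Hs. destruct (Req_dec s 0) as [->|E]; [reflexivity|].
  destruct (MVT_cor2 f (fun _ => 0) 0 s) as [z [Ez _]]; [lra| |lra].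
  intros z Hz. apply H. lra.
Qed.

Lemma strict_convex_of_derive2_pos (f f' f'' : R -> R) b :
  (forall x, x < b ->
     derivable_pt_lim f x (f' x) /\ derivable_pt_lim f' x (f'' x) /\ 0 < f'' x) ->
  forall a1 a2 l, a1 < b -> a2 < b -> a1 <> a2 -> 0 < l < 1 ->
  f (l * a1 + (1 - l) * a2) < l * f a1 + (1 - l) * f a2.
Proof.
  intros H.
  assert (Hlt : forall a1 a2 l, a1 < a2 -> a2 < b -> 0 < l < 1 ->
            f (l * a1 + (1 - l) * a2) < l * f a1 + (1 - l) * f a2).
  { intros a1 a2 l H12 H2b Hl.
    set (m := l * a1 + (1 - l) * a2).
    assert (Hm1 : a1 < m) by (unfold m; nra).
    assert (Hm2 : m < a2) by (unfold m; nra).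
    destruct (MVT_cor2 f f' a1 m Hm1) as [x1 [E1 Hx1]]; [intros z Hz; apply H; lra|].
    destruct (MVT_cor2 f f' m a2 Hm2) as [x2 [E2 Hx2]]; [intros z Hz; apply H; lra|].
    assert (Hslope : f' x1 < f' x2).
    { apply (strict_incr_of_derive_pos f' f''); [intros z Hz; apply H; lra
      | intros z Hz; apply H; lra | lra]. }
    assert (E : l * f a1 + (1 - l) * f a2 - f m = l * (1 - l) * (a2 - a1) * (f' x2 - f' x1)).
    { replace (f a2) with (f m + f' x2 * (a2 - m)) by lra.
      replace (f a1) with (f m - f' x1 * (m - a1)) by lra. unfold m. ring. }
    assert (0 < l * (1 - l) * (a2 - a1)) by (apply Rmult_lt_0_compat; nra).
    nra. }
  intros a1 a2 l H1 H2 Hne Hl.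
  destruct (Rlt_or_le a1 a2) as [H12|H12]; [now apply Hlt|].
  replace (l * a1 + (1 - l) * a2) with ((1 - l) * a2 + (1 - (1 - l)) * a1) by ring.
  assert (E := Hlt a2 a1 (1 - l) ltac:(lra) H1 ltac:(lra)). lra.
Qed.

Lemma inverse_of_strict_incr (f : R -> R) a b :
  a < b ->
  (forall w, a <= w <= b -> continuity_pt f w) ->
  (forall u w, a <= u -> u < w -> w <= b -> f u < f w) ->
  exists g : R -> R,
    (forall y, f a <= y <= f b -> a <= g y <= b /\ f (g y) = y) /\
    (forall u, a <= u <= b -> g (f u) = u).
Proof.
  intros Hab Hcont Hincr.
  assert (Hex : forall y, {u | f a <= y <= f b -> a <= u <= b /\ f u = y}).
  { intros y. destruct (Rle_dec (f a) y) as [H1|H1]; [destruct (Rle_dec y (f b)) as [H2|H2]|].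
    - destruct (f_interv_is_interv f a b y Hab (conj H1 H2) Hcont) as [u Hu].
      exists u. intros _. exact Hu.
    - exists a. lra.
    - exists a. lra. }
  exists (fun y => proj1_sig (Hex y)).
  assert (Hg : forall y, f a <= y <= f b -> a <= proj1_sig (Hex y) <= b /\ f (proj1_sig (Hex y)) = y).
  { intros y. exact (proj2_sig (Hex y)). }
  split; [exact Hg|]. intros u Hu.
  assert (Hmono : forall v w, a <= v -> v <= w -> w <= b -> f v <= f w).
  { intros v w Hv [Hvw| ->] Hw; [left; apply Hincr; lra | lra]. }
  assert (Hy : f a <= f u <= f b) by (split; apply Hmono; lra).
  destruct (Hg _ Hy) as [Hw Hw2]. set (w := proj1_sig (Hex (f u))) in *.
  destruct (Rtotal_order w u) as [H|[H|H]]; [|exact H|];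
    [assert (f w < f u) by (apply Hincr; lra) | assert (f u < f w) by (apply Hincr; lra)]; lra.
Qed.

Lemma derivable_inverse_of_derive_pos (f df : R -> R) a b :
  a < b ->
  (forall w, a <= w <= b -> derivable_pt_lim f w (df w) /\ 0 < df w) ->
  exists g : R -> R,
    (forall y, f a <= y <= f b -> a <= g y <= b /\ f (g y) = y) /\
    (forall u, a <= u <= b -> g (f u) = u) /\
    (forall y, f a < y < f b -> derivable_pt_lim g y (/ df (g y))).
Proof.
  intros Hab Hf.
  assert (Hincr : forall u w, a <= u -> u < w -> w <= b -> f u < f w).
  { intros u w Hu Huw Hw. apply (strict_incr_of_derive_pos f df);
      [intros; apply Hf | intros; apply Hf |]; lra. }
  assert (Hcont : forall w, a <= w <= b -> continuity_pt f w).
  { intros w Hw. apply derivable_continuous_pt. exists (df w). apply Hf, Hw. }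
  destruct (inverse_of_strict_incr f a b Hab Hcont Hincr) as [g [Hg Hgf]].
  exists g. split; [exact Hg|split; [exact Hgf|]].
  intros y Hy.
  assert (Hfa := Hgf a ltac:(lra)). assert (Hfb := Hgf b ltac:(lra)).
  assert (Prf : forall u, g (f a) <= u <= g (f b) -> derivable_pt f u).
  { intros u Hu. exists (df u). apply Hf. lra. }
  assert (Hgy : g (f a) <= g y <= g (f b)) by (rewrite Hfa, Hfb; apply Hg; lra).
  assert (Hpos : 0 < df (g y)) by (apply Hf; apply Hg; lra).
  assert (Hgc : continuity_pt g y).
  { apply (continuity_pt_recip_interv f g a b Hab); [| | |exact Hcont|lra].
    - intros; apply Hincr; lra.
    - intros z H1 H2. unfold comp, id. apply Hg; lra.
    - intros z H1 H2. apply Hg; lra. }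
  assert (H := derivable_pt_lim_recip_interv f g (f a) (f b) y Prf Hgc ltac:(lra) Hy Hgy).
  rewrite (derive_pt_eq_0 f (g y) (df (g y)) (Prf (g y) Hgy)) in H by (apply Hf; apply Hg; lra).
  replace (/ df (g y)) with (1 / df (g y)) by (field; lra).
  apply H; [intros z Hz; unfold comp, id; apply Hg; lra | lra].
Qed.

Lemma kepler_energy x v t : kepler_sol x v t ->
  forall s, 0 <= s <= t -> v s * v s - 2 / x s = v 0 * v 0 - 2 / x 0.
Proof.
  intros Hsol. apply (eq_of_derive_0 (fun s => v s * v s - 2 / x s)).
  intros s Hs. destruct (Hsol s Hs) as [Hx [Hxd Hvd]].
  assert (H := derivable_pt_lim_minus _ _ s _ _ (derivable_pt_lim_mult v v s _ _ Hvd Hvd)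
    (derivable_pt_lim_div (fct_cte 2) x s _ _ (derivable_pt_lim_const 2 s) Hxd ltac:(lra))).
  unfold minus_fct, mult_fct, div_fct, fct_cte in H.
  match type of H with derivable_pt_lim _ _ ?l => replace 0 with l end; [exact H|].
  unfold Rsqr. field. lra.
Qed.

Lemma kepler_velocity_decr x v t : kepler_sol x v t ->
  forall s1 s2, 0 <= s1 -> s1 < s2 -> s2 <= t -> v s2 < v s1.
Proof.
  intros Hsol s1 s2 H1 H12 H2.
  enough (H : (- v)%F s1 < (- v)%F s2) by (unfold opp_fct in H; lra).
  apply (strict_incr_of_derive_pos _ (fun s => / (x s ^ 2))); [| |exact H12].
  - intros z Hz. apply derivable_pt_lim_opp_fwd, Hsol. lra.
  - intros z Hz. assert (0 < x z) by (apply Hsol; lra).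
    apply Rinv_0_lt_compat, pow_lt. lra.
Qed.

Ltac continuity_2d_poly := repeat first
  [ apply continuity_2d_pt_plus | apply continuity_2d_pt_minus
  | apply continuity_2d_pt_mult | apply continuity_2d_pt_opp | apply continuity_2d_pt_id1
  | apply continuity_2d_pt_id2 | apply continuity_2d_pt_const ].

Ltac neq_0_prod := repeat split; repeat (apply Rmult_integral_contrapositive; split); auto.

Section Kepler.

Variables K c : R.
Hypothesis HK : 0 < K.
Hypothesis Hc : 0 < c.

(* With K = 2/x_A and start velocity p, energy conservation v^2 - 2/x = p^2 - K
   gives 2/x = two_over_x p v, hence x^2 = radius_sq p v. *)
Definition two_over_x p u := u * u - p * p + K.
Definition radius_sq p u := 4 / (two_over_x p u * two_over_x p u).
Definition radius_sq_dp p u := 16 * p / (two_over_x p u * two_over_x p u * two_over_x p u).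
Definition radius_sq_dp2 p u :=
  16 / (two_over_x p u * two_over_x p u * two_over_x p u)
  + 96 * p * p / (two_over_x p u * two_over_x p u * two_over_x p u * two_over_x p u).

(* With c = 2/x_B - 2/x_A, this is the velocity at which x_B is reached. *)
Definition arrival_velocity p := - sqrt (p * p + c).

Definition transit_time p := RInt (radius_sq p) (arrival_velocity p) p.
Definition transit_time_d1 p :=
  RInt (radius_sq_dp p) (arrival_velocity p) p
  + 4 * p / ((c + K) * (c + K) * sqrt (p * p + c)) + 4 / (K * K).
Definition transit_time_d2 p :=
  RInt (radius_sq_dp2 p) (arrival_velocity p) p
  + 16 * p * p / ((c + K) * (c + K) * (c + K) * sqrt (p * p + c)) + 16 * p / (K * K * K)
  + 4 * c / ((c + K) * (c + K) * (sqrt (p * p + c) * sqrt (p * p + c) * sqrt (p * p + c))).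

Lemma continuity_2d_pt_two_over_x p u : continuity_2d_pt two_over_x p u.
Proof. unfold two_over_x. continuity_2d_poly. Qed.

Lemma radius_sq_param_regular p u : two_over_x p u <> 0 ->
  is_derive (fun z => radius_sq z u) p (radius_sq_dp p u) /\
  continuity_2d_pt radius_sq p u /\ continuity_2d_pt radius_sq_dp p u.
Proof.
  intros H. split; [|split].
  - unfold radius_sq, radius_sq_dp, two_over_x in *. auto_derive; [neq_0_prod|]. field. auto.
  - unfold radius_sq, Rdiv. apply continuity_2d_pt_mult; [apply continuity_2d_pt_const|].
    apply continuity_2d_pt_inv; [|neq_0_prod].
    apply continuity_2d_pt_mult; apply continuity_2d_pt_two_over_x.
  - unfold radius_sq_dp, Rdiv. apply continuity_2d_pt_mult; [continuity_2d_poly|].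
    apply continuity_2d_pt_inv; [|neq_0_prod].
    repeat apply continuity_2d_pt_mult; apply continuity_2d_pt_two_over_x.
Qed.

Lemma radius_sq_dp_param_regular p u : two_over_x p u <> 0 ->
  is_derive (fun z => radius_sq_dp z u) p (radius_sq_dp2 p u) /\
  continuity_2d_pt radius_sq_dp p u /\ continuity_2d_pt radius_sq_dp2 p u.
Proof.
  intros H. split; [|split].
  - unfold radius_sq_dp2, radius_sq_dp, two_over_x in *. auto_derive; [neq_0_prod|]. field. auto.
  - apply (radius_sq_param_regular p u H).
  - unfold radius_sq_dp2, Rdiv.
    apply continuity_2d_pt_plus; apply continuity_2d_pt_mult; try continuity_2d_poly;
      (apply continuity_2d_pt_inv; [|neq_0_prod]);
      repeat apply continuity_2d_pt_mult; apply continuity_2d_pt_two_over_x.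
Qed.

Lemma radius_sq_pos p u : 0 < two_over_x p u -> 0 < radius_sq p u.
Proof. intros H. unfold radius_sq. apply Rdiv_lt_0_compat; nra. Qed.

Lemma radius_sq_dp2_pos p u : 0 < two_over_x p u -> 0 < radius_sq_dp2 p u.
Proof.
  intros H. unfold radius_sq_dp2. set (d := two_over_x p u) in *.
  assert (0 < d * d * d) by (repeat apply Rmult_lt_0_compat; lra).
  assert (0 < 16 / (d * d * d)) by (apply Rdiv_lt_0_compat; lra).
  assert (0 <= 96 * p * p / (d * d * d * d)) by (apply Rdiv_le_0_compat; nra).
  lra.
Qed.

Lemma two_over_x_pos_near p : p < sqrt K -> exists eps, 0 < eps /\
  forall y t, Rabs (y - p) < eps -> t < p + eps -> 0 < two_over_x y t.
Proof.
  intros Hp. unfold two_over_x.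
  assert (Hs : sqrt K * sqrt K = K) by (apply sqrt_sqrt; lra).
  assert (0 <= sqrt K) by apply sqrt_pos.
  destruct (Rlt_or_le p 0) as [Hn|Hn].
  - set (e := Rmin (- p / 2) (K / (8 * - p))).
    assert (H1 : e <= - p / 2) by apply Rmin_l.
    assert (H2 : e <= K / (8 * - p)) by apply Rmin_r.
    assert (H3 : 0 < e) by (apply Rmin_glb_lt; [lra | apply Rdiv_lt_0_compat; lra]).
    assert (H4 : e * (8 * - p) <= K).
    { apply Rmult_le_reg_r with (/ (8 * - p)); [apply Rinv_0_lt_compat; lra|].
      rewrite Rmult_assoc, Rinv_r, Rmult_1_r by lra. exact H2. }
    exists e. split; [exact H3|]. intros y t Hy Ht. apply Rabs_def2 in Hy.
    assert (t * t > (p + e) * (p + e)) by nra.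
    assert (y * y < (p - e) * (p - e)) by nra.
    nra.
  - exists ((sqrt K - p) / 2). split; [lra|].
    intros y t Hy Ht. apply Rabs_def2 in Hy.
    assert (y * y < K) by nra. nra.
Qed.

Lemma two_over_x_pos_below p : p < sqrt K ->
  exists r, p < r /\ forall u, u < r -> 0 < two_over_x p u.
Proof.
  intros Hp. unfold two_over_x.
  assert (Hs : sqrt K * sqrt K = K) by (apply sqrt_sqrt; lra).
  assert (0 <= sqrt K) by apply sqrt_pos.
  destruct (Rlt_or_le (p * p) K) as [Hlt|Hge].
  - exists (p + 1). split; [lra|]. intros u _. nra.
  - assert (Hn : p < 0) by nra.
    assert (Hs' : sqrt (p * p - K) * sqrt (p * p - K) = p * p - K) by (apply sqrt_sqrt; lra).
    assert (0 <= sqrt (p * p - K)) by apply sqrt_pos.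
    exists (- sqrt (p * p - K)). split; [|intros u Hu; nra].
    assert (sqrt (p * p - K) < - p); [|lra].
    apply Rsqr_incrst_0; unfold Rsqr; lra.
Qed.

Lemma sqrt_arrival_pos p : 0 < sqrt (p * p + c).
Proof. apply sqrt_lt_R0. nra. Qed.

Lemma sqrt_arrival_sq p : sqrt (p * p + c) * sqrt (p * p + c) = p * p + c.
Proof. apply sqrt_sqrt. nra. Qed.

Lemma arrival_velocity_is_derive p :
  is_derive arrival_velocity p (- p / sqrt (p * p + c)).
Proof.
  assert (H := sqrt_arrival_pos p). unfold arrival_velocity.
  auto_derive; [nra|]. field. lra.
Qed.

Lemma arrival_velocity_lt_abs p : arrival_velocity p < - Rabs p.
Proof.
  assert (H := sqrt_arrival_pos p). assert (H2 := sqrt_arrival_sq p).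
  unfold arrival_velocity.
  assert (Rabs p < sqrt (p * p + c)); [|lra].
  apply Rsqr_incrst_0; unfold Rsqr; [|apply Rabs_pos|lra].
  rewrite H2, <- Rabs_mult, Rabs_right by nra. lra.
Qed.

Lemma arrival_velocity_lt p : arrival_velocity p < p.
Proof. assert (H := arrival_velocity_lt_abs p). assert (H2 := Rabs_maj2 p). lra. Qed.

Lemma two_over_x_arrival p : two_over_x p (arrival_velocity p) = c + K.
Proof.
  assert (H := sqrt_arrival_sq p). unfold two_over_x, arrival_velocity. nra.
Qed.

Lemma two_over_x_lt_arrival p u : arrival_velocity p < u < p -> two_over_x p u < c + K.
Proof.
  intros [H1 H2]. assert (HL := arrival_velocity_lt_abs p). assert (Habs := Rle_abs p).
  rewrite <- (two_over_x_arrival p). unfold two_over_x.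
  assert (0 < (u - arrival_velocity p) * (- arrival_velocity p - u)) by (apply Rmult_lt_0_compat; lra).
  nra.
Qed.

Lemma transit_time_is_derive p : p < sqrt K -> is_derive transit_time p (transit_time_d1 p).
Proof.
  intros Hp. destruct (two_over_x_pos_near p Hp) as [eps [He Hpos]].
  assert (HL := arrival_velocity_lt p). assert (Hs := sqrt_arrival_pos p).
  replace (transit_time_d1 p) with
    (RInt (radius_sq_dp p) (arrival_velocity p) p
     - radius_sq p (arrival_velocity p) * (- p / sqrt (p * p + c)) + radius_sq p p * 1).
  - apply (is_derive_RInt_param_bounds radius_sq radius_sq_dp arrival_velocity (fun z => z)
             p _ _ eps He).
    + intros y t Hy Ht. rewrite Rmax_right in Ht by lra.
      apply radius_sq_param_regular, Rgt_not_eq, (Hpos y t Hy). lra.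
    + apply arrival_velocity_is_derive.
    + apply (is_derive_id (K := R_AbsRing)).
  - unfold transit_time_d1, radius_sq. rewrite two_over_x_arrival.
    unfold two_over_x. field. lra.
Qed.

Lemma transit_time_d1_is_derive p : p < sqrt K -> is_derive transit_time_d1 p (transit_time_d2 p).
Proof.
  intros Hp. destruct (two_over_x_pos_near p Hp) as [eps [He Hpos]].
  assert (HL := arrival_velocity_lt p).
  assert (Hs := sqrt_arrival_pos p). assert (Hs2 := sqrt_arrival_sq p).
  assert (Hint : is_derive (fun z => RInt (radius_sq_dp z) (arrival_velocity z) z) p
    (RInt (radius_sq_dp2 p) (arrival_velocity p) p
     - radius_sq_dp p (arrival_velocity p) * (- p / sqrt (p * p + c)) + radius_sq_dp p p * 1)).
  { apply (is_derive_RInt_param_bounds radius_sq_dp radius_sq_dp2 arrival_velocity (fun z => z)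
             p _ _ eps He).
    - intros y t Hy Ht. rewrite Rmax_right in Ht by lra.
      apply radius_sq_dp_param_regular, Rgt_not_eq, (Hpos y t Hy). lra.
    - apply arrival_velocity_is_derive.
    - apply (is_derive_id (K := R_AbsRing)). }
  assert (Hbd : is_derive (fun z => 4 * z / ((c + K) * (c + K) * sqrt (z * z + c))) p
     (4 * c / ((c + K) * (c + K) * (sqrt (p * p + c) * sqrt (p * p + c) * sqrt (p * p + c))))).
  { auto_derive.
    - split; [nra|split; [apply Rgt_not_eq; repeat apply Rmult_lt_0_compat; lra|trivial]].
    - set (s := sqrt (p * p + c)) in *. field_simplify_eq; [|split; lra].
      replace (s ^ 2) with (p * p + c) by (rewrite <- Hs2; ring). ring. }
  assert (Hsum := is_derive_plus _ _ _ _ _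
    (is_derive_plus _ _ _ _ _ Hint Hbd) (is_derive_const (K := R_AbsRing) (4 / (K * K)) p)).
  unfold transit_time_d1.
  match type of Hsum with is_derive _ _ ?l => replace (transit_time_d2 p) with l end.
  - exact Hsum.
  - unfold transit_time_d2, radius_sq_dp, plus, zero; simpl.
    rewrite two_over_x_arrival. unfold two_over_x. field. lra.
Qed.

(* For p < 0 the boundary term 16 p / K^3 of transit_time_d2 is negative. It is absorbed using
   the explicit primitive d2_primitive p of radius_sq_dp2 p minus the nonnegative d2_defect p. *)
Definition d2_primitive p u :=
  4 / K * (u ^ 6 + (K - 3 * (p * p)) * u ^ 4 - (6 * K * (p * p) - 3 * (p * p) * (p * p)) * u ^ 2
           + (p * p) * (p * p) * (K - p * p))
  / (u ^ 3 * two_over_x p u ^ 3).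
Definition d2_defect p u := 12 * (u * u - p * p) ^ 2 / (K * two_over_x p u ^ 2 * u ^ 4).

Lemma d2_primitive_is_derive p u : u <> 0 -> two_over_x p u <> 0 ->
  is_derive (d2_primitive p) u (radius_sq_dp2 p u - d2_defect p u).
Proof.
  intros Hu HD. unfold d2_primitive, radius_sq_dp2, d2_defect, two_over_x in *.
  auto_derive; [neq_0_prod; lra|]. field. lra.
Qed.

Lemma d2_primitive_start p : p <> 0 -> d2_primitive p p + 16 * p / (K * K * K) = 0.
Proof.
  intros Hp. unfold d2_primitive. replace (two_over_x p p) with K by (unfold two_over_x; ring).
  field. lra.
Qed.

Lemma d2_primitive_arrival p :
  - d2_primitive p (arrival_velocity p)
  + 16 * p * p / ((c + K) * (c + K) * (c + K) * sqrt (p * p + c))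
  + 4 * c / ((c + K) * (c + K) * (sqrt (p * p + c) * sqrt (p * p + c) * sqrt (p * p + c)))
  = 4 * c / (K * (c + K) * (sqrt (p * p + c) * sqrt (p * p + c) * sqrt (p * p + c))).
Proof.
  assert (Hs := sqrt_arrival_pos p). assert (Hs2 := sqrt_arrival_sq p).
  unfold d2_primitive. rewrite two_over_x_arrival. unfold arrival_velocity.
  set (s := sqrt (p * p + c)) in *.
  replace (16 * p * p) with (16 * (p * p)) by ring.
  replace (p * p) with (s * s - c) by lra.
  field. repeat split; lra.
Qed.

Lemma RInt_radius_sq_dp2_ge p a : a < p -> p < 0 ->
  (forall u, a <= u <= p -> 0 < two_over_x p u) ->
  d2_primitive p p - d2_primitive p a <= RInt (radius_sq_dp2 p) a p.
Proof.
  intros Hap Hp HD.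
  assert (Hcont : forall f : R -> R, (forall u, a <= u <= p -> ex_derive f u) ->
            forall u, Rmin a p <= u <= Rmax a p -> continuous f u).
  { intros f Hf u Hu. rewrite Rmin_left, Rmax_right in Hu by lra.
    apply (ex_derive_continuous (K := R_AbsRing) (V := R_NormedModule)), Hf, Hu. }
  assert (Hprim : is_RInt (fun u => radius_sq_dp2 p u - d2_defect p u) a p
                    (d2_primitive p p - d2_primitive p a)).
  { apply (is_RInt_derive (V := R_CompleteNormedModule)).
    - intros u Hu. rewrite Rmin_left, Rmax_right in Hu by lra.
      apply d2_primitive_is_derive; [lra | apply Rgt_not_eq, HD, Hu].
    - apply Hcont. intros u Hu. assert (Hd := HD u Hu).
      unfold radius_sq_dp2, d2_defect, two_over_x in *.
      auto_derive. neq_0_prod; try apply pow_nonzero; lra. }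
  assert (Hdefect : ex_RInt (d2_defect p) a p).
  { apply (ex_RInt_continuous (V := R_CompleteNormedModule)), Hcont.
    intros u Hu. assert (Hd := HD u Hu). unfold d2_defect, two_over_x in *.
    auto_derive. neq_0_prod; try apply pow_nonzero; lra. }
  assert (Hdefect_ge : 0 <= RInt (d2_defect p) a p).
  { apply RInt_ge_0; [lra | exact Hdefect|]. intros u Hu.
    assert (Hd := HD u ltac:(lra)). unfold d2_defect.
    apply Rdiv_le_0_compat; [apply Rmult_le_pos; [lra | apply pow2_ge_0]|].
    assert (0 < u * u) by nra.
    assert (0 < u ^ 4) by (replace (u ^ 4) with ((u * u) * (u * u)) by ring; nra).
    apply Rmult_lt_0_compat; [apply Rmult_lt_0_compat; [lra | apply pow_lt; lra] | lra]. }
  replace (RInt (radius_sq_dp2 p) a p) with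
    (RInt (fun u => radius_sq_dp2 p u - d2_defect p u) a p + RInt (d2_defect p) a p).
  - rewrite (is_RInt_unique _ _ _ _ Hprim). lra.
  - rewrite <- (RInt_plus (V := R_CompleteNormedModule)); [| eexists; exact Hprim | exact Hdefect].
    apply RInt_ext. intros u _. unfold plus; simpl. ring.
Qed.

Lemma transit_time_d2_pos p : p < sqrt K -> 0 < transit_time_d2 p.
Proof.
  intros Hp. destruct (two_over_x_pos_below p Hp) as [r [Hr HD]].
  assert (HL := arrival_velocity_lt p). set (L := arrival_velocity p) in *.
  assert (Hs := sqrt_arrival_pos p). set (s := sqrt (p * p + c)) in *.
  assert (0 < s * s * s) by (repeat apply Rmult_lt_0_compat; lra).
  assert (Harr : 0 < 4 * c / ((c + K) * (c + K) * (s * s * s))).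
  { apply Rdiv_lt_0_compat; [lra|]. repeat apply Rmult_lt_0_compat; lra. }
  unfold transit_time_d2. fold L s.
  destruct (Rlt_or_le p 0) as [Hn|Hn].
  - assert (Hge := RInt_radius_sq_dp2_ge p L HL Hn ltac:(intros u Hu; apply HD; lra)).
    assert (Hstart := d2_primitive_start p ltac:(lra)).
    assert (Hend := d2_primitive_arrival p). fold L s in Hend.
    assert (0 < 4 * c / (K * (c + K) * (s * s * s))).
    { apply Rdiv_lt_0_compat; [lra|]. repeat apply Rmult_lt_0_compat; lra. }
    lra.
  - assert (0 <= RInt (radius_sq_dp2 p) L p).
    { apply RInt_ge_0; [lra| |intros u Hu; left; apply radius_sq_dp2_pos, HD; lra].
      apply (ex_RInt_continuous (V := R_CompleteNormedModule)). intros u Hu.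
      rewrite Rmin_left, Rmax_right in Hu by lra.
      apply continuity_2d_pt_snd, radius_sq_dp_param_regular, Rgt_not_eq, HD. lra. }
    assert (0 <= 16 * p * p / ((c + K) * (c + K) * (c + K) * s)).
    { apply Rdiv_le_0_compat; [nra|]. repeat apply Rmult_lt_0_compat; lra. }
    assert (0 <= 16 * p / (K * K * K)).
    { apply Rdiv_le_0_compat; [lra|]. repeat apply Rmult_lt_0_compat; lra. }
    lra.
Qed.

Lemma kepler_sol_of_velocity p v t :
  (forall s, 0 <= s <= t ->
     0 < two_over_x p (v s) /\ derivable_pt_lim v s (- / radius_sq p (v s))) ->
  kepler_sol (fun s => 2 / two_over_x p (v s)) v t.
Proof.
  intros Hv s Hs. destruct (Hv s Hs) as [Hd Hvd].
  split; [apply Rdiv_lt_0_compat; lra|split].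
  - assert (Hx : derivable_pt_lim (fun w => 2 / two_over_x p w) (v s)
                   (- v s * radius_sq p (v s))).
    { apply is_derive_Reals. unfold radius_sq, two_over_x in *.
      auto_derive; [lra|]. field. lra. }
    assert (H := derivable_pt_lim_comp _ _ s _ _ Hvd Hx). unfold comp in H.
    assert (0 < radius_sq p (v s)) by (apply radius_sq_pos, Hd).
    replace (- v s * radius_sq p (v s) * - / radius_sq p (v s)) with (v s) in H
      by (field; lra).
    exact H.
  - replace (- / (2 / two_over_x p (v s)) ^ 2) with (- / radius_sq p (v s)); [exact Hvd|].
    unfold radius_sq. field. lra.
Qed.

(* Along the arc, the velocity w is reached at time [- neg_time p w]. *)
Definition neg_time p w := RInt (radius_sq p) p w.

Lemma neg_time_start p : neg_time p p = 0.
Proof. exact (RInt_point (V := R_CompleteNormedModule) p _). Qed.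

Section Arc.

Variables p r : R.
Hypothesis Hpr : p < r.
Hypothesis Hpos : forall u, u < r -> 0 < two_over_x p u.

Lemma ex_RInt_radius_sq a b : a < r -> b < r -> ex_RInt (radius_sq p) a b.
Proof.
  intros Ha Hb. apply (ex_RInt_continuous (V := R_CompleteNormedModule)). intros u Hu.
  assert (Rmax a b < r) by (apply Rmax_lub_lt; lra).
  apply continuity_2d_pt_snd, radius_sq_param_regular, Rgt_not_eq, Hpos. lra.
Qed.

Lemma neg_time_is_derive w : w < r -> is_derive (neg_time p) w (radius_sq p w).
Proof.
  intros Hw. apply (is_derive_RInt (V := R_NormedModule) (radius_sq p) (neg_time p) p w).
  - exists (mkposreal ((r - w) / 2) ltac:(lra)). intros b Hb.
    unfold ball in Hb; simpl in Hb; unfold AbsRing_ball, abs, minus, plus, opp in Hb; simpl in Hb.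
    apply Rabs_def2 in Hb.
    apply (RInt_correct (V := R_CompleteNormedModule)), ex_RInt_radius_sq; lra.
  - apply continuity_2d_pt_snd, radius_sq_param_regular, Rgt_not_eq, Hpos, Hw.
Qed.

Lemma neg_time_lt u w : u < w -> w < r -> neg_time p u < neg_time p w.
Proof.
  intros Huw Hw. apply (strict_incr_of_derive_pos _ (radius_sq p)); [| |exact Huw].
  - intros z Hz. apply is_derive_Reals, neg_time_is_derive. lra.
  - intros z Hz. apply radius_sq_pos, Hpos. lra.
Qed.

Lemma neg_time_le u w : u <= w -> w < r -> neg_time p u <= neg_time p w.
Proof. intros [Huw| ->] Hw; [left; apply neg_time_lt | right]; trivial. Qed.

Lemma transit_time_neg_time : transit_time p = - neg_time p (arrival_velocity p).
Proof.
  assert (HL := arrival_velocity_lt p).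
  unfold transit_time, neg_time. rewrite <- (opp_RInt_swap (V := R_CompleteNormedModule));
    [reflexivity | apply ex_RInt_radius_sq; lra].
Qed.

Lemma transit_time_pos_below : 0 < transit_time p.
Proof.
  assert (HL := arrival_velocity_lt p).
  assert (H := neg_time_lt (arrival_velocity p) p HL Hpr).
  rewrite neg_time_start in H. rewrite transit_time_neg_time. lra.
Qed.

(* The arc is obtained by inverting the increasing map w |-> neg_time p w on an interval
   slightly larger than [arrival_velocity p, p]. *)
Lemma kepler_arc_exists :
  exists x v : R -> R,
    kepler_sol x v (transit_time p) /\ x 0 = 2 / K /\ v 0 = p /\
    x (transit_time p) = 2 / (c + K) /\
    (forall s, 0 < s < transit_time p -> x s <> 2 / (c + K)).
Proof.
  assert (HL := arrival_velocity_lt p). assert (HT := transit_time_neg_time).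
  set (L := arrival_velocity p) in *. set (T := transit_time p) in *.
  set (a := L - 1). set (b := (p + r) / 2).
  destruct (derivable_inverse_of_derive_pos (neg_time p) (radius_sq p) a b)
    as [g [Hg [Hgf Hgder]]]; [unfold a, b; lra| |].
  { intros w Hw. split; [apply is_derive_Reals, neg_time_is_derive | apply radius_sq_pos, Hpos];
      unfold b in Hw; lra. }
  assert (Ha : neg_time p a < neg_time p L) by (apply neg_time_lt; unfold a; lra).
  assert (Hb : neg_time p p < neg_time p b) by (apply neg_time_lt; unfold b; lra).
  assert (Hp0 := neg_time_start p).
  assert (Hrange : forall s, 0 <= s <= T -> neg_time p a < - s < neg_time p b) by (intros; lra).
  set (v := fun s => g (- s)).
  assert (Hvr : forall s, 0 <= s <= T -> a <= v s < r).
  { intros s Hs. assert (a <= v s <= b) by (apply Hg; apply Hrange in Hs; lra). unfold b in *. lra. }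
  assert (Hgt : forall s, 0 <= s <= T -> neg_time p (v s) = - s).
  { intros s Hs. apply Hg. apply Hrange in Hs. lra. }
  assert (Hv0 : v 0 = p) by (unfold v; rewrite Ropp_0, <- Hp0; apply Hgf; unfold a, b; lra).
  assert (HvT : v T = L) by (unfold v; rewrite HT, Ropp_involutive; apply Hgf; unfold a, b; lra).
  assert (Hvmid : forall s, 0 < s < T -> L < v s < p).
  { intros s Hs.
    assert (E : neg_time p (v s) = - s) by (apply Hgt; lra).
    assert (Hvs := Hvr s ltac:(lra)).
    split; apply Rnot_le_lt; intros H.
    - assert (neg_time p (v s) <= neg_time p L) by (apply neg_time_le; lra). lra.
    - assert (neg_time p p <= neg_time p (v s)) by (apply neg_time_le; lra). lra. }
  exists (fun s => 2 / two_over_x p (v s)), v.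
  split; [|split; [|split; [|split]]].
  - apply kepler_sol_of_velocity. intros s Hs.
    assert (Hd : 0 < two_over_x p (v s)) by (apply Hpos, Hvr, Hs).
    split; [exact Hd|].
    assert (H := derivable_pt_lim_comp _ _ s _ _ (derivable_pt_lim_opp _ _ _ (derivable_pt_lim_id s))
                   (Hgder (- s) (Hrange s Hs))).
    unfold comp in H. replace (- / radius_sq p (v s)) with (/ radius_sq p (g (- s)) * - 1)
      by (unfold v; ring). exact H.
  - rewrite Hv0. unfold two_over_x. field. lra.
  - exact Hv0.
  - rewrite HvT. unfold L. rewrite two_over_x_arrival. reflexivity.
  - intros s Hs E.
    assert (Hd : 0 < two_over_x p (v s)) by (apply Hpos, Hvr; lra).
    assert (Hlt := two_over_x_lt_arrival p (v s) (Hvmid s Hs)).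
    assert (2 / (c + K) < 2 / two_over_x p (v s)).
    { apply Rmult_lt_compat_l; [lra|]. apply Rinv_lt_contravar; nra. }
    lra.
Qed.

(* Conversely, on any arc the velocity decreases and [neg_time p (v s) + s] is constant. *)
Lemma kepler_arc_time x v t : kepler_sol x v t ->
  x 0 = 2 / K -> v 0 = p -> x t = 2 / (c + K) -> 0 < t -> t = transit_time p.
Proof.
  intros Hsol Hx0 Hv0 Hxt Ht.
  assert (HL := arrival_velocity_lt p). assert (HLabs := arrival_velocity_lt_abs p).
  set (L := arrival_velocity p) in *.
  assert (HDx : forall s, 0 <= s <= t -> two_over_x p (v s) = 2 / x s).
  { intros s Hs. assert (E := kepler_energy x v t Hsol s Hs).
    rewrite Hx0, Hv0 in E. replace (2 / (2 / K)) with K in E by (field; lra).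
    unfold two_over_x. lra. }
  assert (Hvp : forall s, 0 <= s <= t -> v s <= p).
  { intros s Hs. destruct (Req_dec s 0) as [->|]; [lra|].
    rewrite <- Hv0. left. apply (kepler_velocity_decr x v t Hsol); lra. }
  assert (HvT : v t = L).
  { assert (Hd := HDx t ltac:(lra)). rewrite Hxt in Hd.
    replace (2 / (2 / (c + K))) with (two_over_x p L) in Hd
      by (unfold L; rewrite two_over_x_arrival; field; lra).
    assert (v t < p) by (rewrite <- Hv0; apply (kepler_velocity_decr x v t Hsol); lra).
    unfold two_over_x in Hd. assert (Habs := Rle_abs p).
    assert (H0 : (v t - L) * (v t + L) = 0) by nra.
    apply Rmult_integral in H0. destruct H0; lra. }
  assert (Hconst : neg_time p (v t) + t = neg_time p (v 0) + 0).
  { apply (eq_of_derive_0 (fun s => neg_time p (v s) + s) t); [|lra].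
    intros s Hs. destruct (Hsol s Hs) as [Hxs [_ Hvd]].
    assert (Hphi : derivable_pt_lim (neg_time p) (v s) (radius_sq p (v s))).
    { apply is_derive_Reals, neg_time_is_derive. specialize (Hvp s Hs). lra. }
    assert (H := derivable_pt_lim_plus _ _ s _ _
                   (derivable_pt_lim_comp _ _ s _ _ Hvd Hphi) (derivable_pt_lim_id s)).
    unfold plus_fct, comp, id in H.
    replace 0 with (radius_sq p (v s) * - / x s ^ 2 + 1); [exact H|].
    unfold radius_sq. rewrite HDx by exact Hs. field. lra. }
  rewrite HvT, Hv0, neg_time_start in Hconst. rewrite transit_time_neg_time. fold L. lra.
Qed.

End Arc.

Lemma transit_time_pos p : p < sqrt K -> 0 < transit_time p.
Proof.
  intros Hp. destruct (two_over_x_pos_below p Hp) as [r [Hr Hpos]].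
  exact (transit_time_pos_below p r Hr Hpos).
Qed.

Lemma first_hit_transit_time p : p < sqrt K -> first_hit (2 / K) (2 / (c + K)) p (transit_time p).
Proof.
  intros Hp. destruct (two_over_x_pos_below p Hp) as [r [Hr Hpos]].
  split; [exact (transit_time_pos_below p r Hr Hpos) | exact (kepler_arc_exists p r Hr Hpos)].
Qed.

Lemma first_hit_time_eq p t : p < sqrt K ->
  first_hit (2 / K) (2 / (c + K)) p t -> t = transit_time p.
Proof.
  intros Hp [Ht [x [v [Hsol [Hx0 [Hv0 [Hxt _]]]]]]].
  destruct (two_over_x_pos_below p Hp) as [r [Hr Hpos]].
  exact (kepler_arc_time p r Hr Hpos x v t Hsol Hx0 Hv0 Hxt Ht).
Qed.

Lemma transit_time_derive2_pos p : p < sqrt K ->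
  derivable_pt_lim transit_time p (transit_time_d1 p) /\
  derivable_pt_lim transit_time_d1 p (transit_time_d2 p) /\
  0 < transit_time_d2 p.
Proof.
  intros Hp. split; [|split].
  - apply is_derive_Reals, transit_time_is_derive, Hp.
  - apply is_derive_Reals, transit_time_d1_is_derive, Hp.
  - apply transit_time_d2_pos, Hp.
Qed.

End Kepler.

Theorem proposition4 (xA xB : R) (hB : 0 < xB) (hBA : xB < xA) :
  exists TDR : R -> R,
    (forall vA, vA < vE xA -> first_hit xA xB vA (TDR vA)) /\
    (forall vA t, vA < vE xA -> first_hit xA xB vA t -> t = TDR vA) /\
    (forall vA, vA < vE xA -> 0 < TDR vA) /\
    (forall a b l, a < vE xA -> b < vE xA -> a <> b -> 0 < l < 1 ->
       TDR (l * a + (1 - l) * b) < l * TDR a + (1 - l) * TDR b) /\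
    (exists T1 T2 : R -> R,
       forall vA, vA < vE xA ->
         derivable_pt_lim TDR vA (T1 vA) /\
         derivable_pt_lim T1 vA (T2 vA) /\
         0 < T2 vA).
Proof.
  set (K := 2 / xA). set (c := 2 / xB - 2 / xA).
  assert (HK : 0 < K) by (unfold K; apply Rdiv_lt_0_compat; lra).
  assert (Hc : 0 < c).
  { unfold c, Rdiv. assert (/ xA < / xB) by (apply Rinv_lt_contravar; nra). lra. }
  assert (EA : 2 / K = xA) by (unfold K; field; lra).
  assert (EB : 2 / (c + K) = xB) by (unfold c, K; field; lra).
  change (vE xA) with (sqrt K).
  assert (Hd2 := transit_time_derive2_pos K c HK Hc).
  exists (transit_time K c). split; [|split; [|split; [|split]]].
  - intros vA HvA. rewrite <- EA, <- EB. apply first_hit_transit_time; assumption.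
  - intros vA t HvA. rewrite <- EA, <- EB. apply first_hit_time_eq; assumption.
  - intros vA HvA. apply transit_time_pos; assumption.
  - apply (strict_convex_of_derive2_pos _ _ _ _ Hd2).
  - exists (transit_time_d1 K c), (transit_time_d2 K c). exact Hd2.
Qed.
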